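(* Let $n \ge d \ge 1$ be integers. Let $R^{\mathrm{S}}\in\{0,+1,-1\}^{d\times n}$ be a random matrix produced by the S-SSE construction and $R^{\mathrm{SE}}\in\{0,+1,-1\}^{d\times n}$ a random matrix produced by the SE construction (both described in the context). Fix a row index $t\in[d]$, let $\mathbf{Y}$ be the number of nonzero entries in row $t$ of $R^{\mathrm{S}}$, and let $\mathbf{Z}$ be the number of nonzero entries in row $t$ of $R^{\mathrm{SE}}$. Then $$\mathbb{E}(\mathbf{Y})=\mathbb{E}(\mathbf{Z}),\qquad \operatorname{Var}(\mathbf{Y})\le \operatorname{Var}(\mathbf{Z}).$$
   Context: $[k]=\{1,\dots,k\}$. SE (sparse embedding) construction: choose independently for each column $i\in[n]$ a row label $h(i)$ uniformly at random from $[d]$ (i.e. uniform sampling with replacement), and independent Rademacher signs $\sigma_i\in\{+1,-1\}$ (each with probability $1/2$); set $R^{\mathrm{SE}}_{h(i),i}=\sigma_i$ and all other entries $0$. S-SSE (stable sparse subspace embedding) construction: form the multiset $D$ consisting of $[d]$ repeated $\lceil n/d\rceil$ times; draw $n$ elements from $D$ uniformly at random without replacement, giving a sequence $\mathcal{S}=(\mathcal{S}(1),\dots,\mathcal{S}(n))$; independently choose Rademacher signs $\sigma_i\in\{+1,-1\}$ with probability $1/2$ each; set $R^{\mathrm{S}}_{\mathcal{S}(i),i}=\sigma_i$ for $i\in[n]$ and all other entries $0$. In both constructions each column has exactly one nonzero entry. *)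

From HB Require Import structures.
From mathcomp Require Import all_boot all_order all_algebra.
Set Implicit Arguments. Unset Strict Implicit. Unset Printing Implicit Defensive.
Import Order.TTheory GRing.Theory Num.Theory.
Local Open Scope ring_scope.

Definition unifE {T : finType} {R : realFieldType} (A : {set T}) (X : T -> R) : R :=
  (\sum_(w in A) X w) / (#|A|%:R).

Definition unifVar {T : finType} {R : realFieldType} (A : {set T}) (X : T -> R) : R :=
  unifE A (fun w => (X w - unifE A X) ^+ 2).

Definition sgn (b : bool) : int := if b then 1 else -1.

(* ---------------- SE construction ----------------
   Outcome: (h, sigma) with h : [n] -> [d] (independent uniform labels)
   and sigma : [n] -> {+1,-1}; uniform on all such pairs. *)
Notation SE_space n d :=
  ({ffun 'I_n -> 'I_d} * {ffun 'I_n -> bool})%type.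

Definition SE_outcomes (n d : nat) : {set SE_space n d} := setT.

Definition R_SE (n d : nat) (w : SE_space n d) : 'M[int]_(d, n) :=
  \matrix_(j < d, i < n) (if w.1 i == j then sgn (w.2 i) else 0).

(* ---------------- S-SSE construction ----------------
   The multiset D = [d] repeated m = ceil(n/d) times is represented by the
   set of (distinguishable) positions 'I_m * 'I_d, the position (k, j)
   carrying the label j.  Drawing n elements uniformly without replacement,
   in order, is a uniformly random injection f : [n] -> positions; then
   S(i) = label of f(i). *)
Definition ceil_div (n d : nat) : nat := (n + d.-1) %/ d.

Notation SSSE_space n d :=
  ({ffun 'I_n -> ('I_(ceil_div n d) * 'I_d)} * {ffun 'I_n -> bool})%type.

Definition SSSE_outcomes (n d : nat) : {set SSSE_space n d} :=
  [set w : SSSE_space n d | injectiveb w.1].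

Definition R_S (n d : nat) (w : SSSE_space n d) : 'M[int]_(d, n) :=
  \matrix_(j < d, i < n) (if (w.1 i).2 == j then sgn (w.2 i) else 0).

Definition nnz_row (d n : nat) (M : 'M[int]_(d, n)) (t : 'I_d) : nat :=
  #|[set i : 'I_n | M t i != 0]|.

From HB Require Import structures.
From mathcomp Require Import all_boot all_order all_algebra.
From mathcomp Require Import perm ring zify.
Set Implicit Arguments. Unset Strict Implicit. Unset Printing Implicit Defensive.
Import Order.TTheory GRing.Theory Num.Theory.

(* The signs never vanish, so both row counts are #|{i | f i \in L}| for the
   label/position map f, drawn uniformly from a set A of functions [n] -> T that
   is closed under relabelling by permutations of T: for S-SSE, A is the set of
   injections into the m * d positions (m = ceil(n/d)) and L the m positions
   labelled t; for SE, A is the set of all maps into [d] and L = {t}.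
   Relabelling invariance gives P(f i \in L) = #|L| / #|T| = 1/d in both cases,
   hence equal means.  For i != j, P(f i \in L, f j \in L) is
   #|L|(#|L|-1) / (#|T|(#|T|-1)) for injections (drawing without replacement)
   and (#|L|/#|T|)^2 for all maps; the variance of a sum of exchangeable
   indicators increases with this pair probability, and the former is the
   smaller one. *)

Lemma sum_nat_in (T : finType) (L : {pred T}) : \sum_(p : T) (p \in L) = #|L|.
Proof.
by rewrite -sum1_card [RHS]big_mkcond; apply: eq_bigr => p _; case: (p \in L).
Qed.

Section CoordinateCounts.
Variables (T : finType) (n : nat) (A : {set {ffun 'I_n -> T}}).

Definition coord_count (i : 'I_n) (p : T) : nat := \sum_(f in A) (f i == p).

Definition coord2_count (i j : 'I_n) (p q : T) : nat :=
  \sum_(f in A) ((f i == p) && (f j == q)).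

Lemma sum_coord i (G : T -> nat) :
  \sum_(f in A) G (f i) = \sum_p coord_count i p * G p.
Proof.
under [RHS]eq_bigr => p _ do rewrite big_distrl /=.
rewrite exchange_big /=; apply: eq_bigr => f _.
rewrite (bigD1 (f i)) //= eqxx mul1n big1 ?addn0 // => p.
by rewrite eq_sym => /negbTE ->.
Qed.

Lemma sum_coord2 i j (G : T -> T -> nat) :
  \sum_(f in A) G (f i) (f j) = \sum_p \sum_q coord2_count i j p q * G p q.
Proof.
under [RHS]eq_bigr => p _ do under eq_bigr => q _ do rewrite big_distrl /=.
under [RHS]eq_bigr => p _ do rewrite exchange_big /=.
rewrite exchange_big /=; apply: eq_bigr => f _.
rewrite (bigD1 (f i)) //= [X in (_ + X)%N]big1 ?addn0; last first.
  by move=> p /negbTE fip; apply: big1 => q _; rewrite eq_sym fip.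
rewrite (bigD1 (f j)) //= !eqxx mul1n big1 ?addn0 // => q /negbTE fjq.
by rewrite [f j == q]eq_sym fjq andbF.
Qed.

Definition relabel (s : {perm T}) (f : {ffun 'I_n -> T}) : {ffun 'I_n -> T} :=
  [ffun x => s (f x)].

Lemma relabel_inj s : injective (relabel s).
Proof.
move=> f g /ffunP efg; apply/ffunP => x.
by have := efg x; rewrite !ffunE => /perm_inj.
Qed.

Lemma injectiveb_relabel s f : injectiveb (relabel s f) = injectiveb f.
Proof.
rewrite /relabel; apply/injectiveP/injectiveP => inj_f x y fxy; apply: inj_f.
  by rewrite !ffunE fxy.
by move: fxy; rewrite !ffunE => /perm_inj.
Qed.

Section RelabelClosed.
Hypothesis relabel_closed : forall s f, (relabel s f \in A) = (f \in A).

Lemma coord_count_relabel i p (s : {perm T}) : coord_count i (s p) = coord_count i p.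
Proof.
rewrite /coord_count (reindex_inj (@relabel_inj s)) /=.
apply: eq_big => f; first exact: relabel_closed.
by rewrite ffunE (inj_eq perm_inj).
Qed.

Lemma coord2_count_relabel i j p q (s : {perm T}) :
  coord2_count i j (s p) (s q) = coord2_count i j p q.
Proof.
rewrite /coord2_count (reindex_inj (@relabel_inj s)) /=.
apply: eq_big => f; first exact: relabel_closed.
by rewrite !ffunE !(inj_eq perm_inj).
Qed.

Lemma sum_coord_uniform i :
  exists c, forall G : T -> nat, \sum_(f in A) G (f i) = (c * \sum_p G p)%N.
Proof.
have [p0 _ | T0] := pickP (@predT T); last first.
  by exists 0%N => G; rewrite sum_coord big1 // => p; have := T0 p.
exists (coord_count i p0) => G; rewrite sum_coord big_distrr; apply: eq_bigr => p _.
by rewrite -(coord_count_relabel i p0 (tperm p0 p)) tpermL.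
Qed.

Section Injective.
Hypothesis injA : forall f, f \in A -> injective f.
Variables (i j : 'I_n).
Hypothesis neq_ij : i != j.

Lemma coord2_count_diag p : coord2_count i j p p = 0%N.
Proof.
apply: big1 => f fA; case: (f i =P p) => //= fip; case: (f j =P p) => //= fjp.
by move: neq_ij; rewrite -(inj_eq (injA fA)) fip fjp eqxx.
Qed.

Lemma coord2_count_offdiag p q p' q' :
  p != q -> p' != q' -> coord2_count i j p q = coord2_count i j p' q'.
Proof.
(* two transpositions carry (p, q) to (p', q') *)
move=> neq_pq neq_pq'.
rewrite -(coord2_count_relabel i j p q (tperm p p')) tpermL.
set r := tperm p p' q.
have neq_rp' : r != p' by rewrite /r -{2}(tpermL p p') (inj_eq perm_inj) eq_sym.
by rewrite -(coord2_count_relabel i j p' r (tperm r q')) tpermL tpermD // eq_sym.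
Qed.

Lemma sum_coord2_injective : exists c, forall G : T -> T -> nat,
  \sum_(f in A) G (f i) (f j) = (c * \sum_p \sum_(q | q != p) G p q)%N.
Proof.
have [c offdiag] : exists c, forall p q, p != q -> coord2_count i j p q = c.
  have [[p0 q0] /= neq_pq0 | no_pair] := pickP (fun pq : T * T => pq.1 != pq.2).
    by exists (coord2_count i j p0 q0) => p q neq_pq; apply: coord2_count_offdiag.
  by exists 0%N => p q neq_pq; have := no_pair (p, q); rewrite /= neq_pq.
exists c => G; rewrite sum_coord2 big_distrr; apply: eq_bigr => p _.
rewrite (bigD1 p) //= coord2_count_diag add0n big_distrr.
by apply: eq_bigr => q neq_qp; rewrite offdiag // eq_sym.
Qed.

End Injective.
End RelabelClosed.
End CoordinateCounts.

Section AllFunctions.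
Variables (T : finType) (n : nat) (i j : 'I_n).
Hypothesis neq_ij : i != j.

(* Relabelling only the coordinate j maps the set of all functions onto itself,
   so for all maps the pair count at (p, q) equals the one at (p, p). *)
Definition swap_at (k : 'I_n) (p q : T) (f : {ffun 'I_n -> T}) : {ffun 'I_n -> T} :=
  [ffun x => if x == k then tperm p q (f x) else f x].

Lemma swap_atK k p q : involutive (swap_at k p q).
Proof.
by move=> f; apply/ffunP => x; rewrite !ffunE; case: (x == k); rewrite ?tpermK.
Qed.

Lemma coord2_count_setT p q :
  coord2_count [set: {ffun 'I_n -> T}] i j p q =
  coord2_count [set: {ffun 'I_n -> T}] i j p p.
Proof.
rewrite /coord2_count (reindex_inj (inv_inj (swap_atK j p q))) /=.
apply: eq_big => f; first by rewrite !inE.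
move=> _; rewrite !ffunE (negbTE neq_ij) eqxx.
by rewrite -(inj_eq (@perm_inj _ (tperm p q)) (f j) p) tpermL.
Qed.

Lemma sum_coord2_setT : exists c, forall G : T -> T -> nat,
  \sum_(f in [set: {ffun 'I_n -> T}]) G (f i) (f j) = (c * \sum_p \sum_q G p q)%N.
Proof.
have [p0 _ | T0] := pickP (@predT T); last first.
  by exists 0%N => G; rewrite sum_coord2 big1 // => p; have := T0 p.
have relabel_closed s f :
    (relabel s f \in [set: {ffun 'I_n -> T}]) = (f \in [set: _]) by rewrite !inE.
exists (coord2_count [set: {ffun 'I_n -> T}] i j p0 p0) => G.
rewrite sum_coord2 big_distrr; apply: eq_bigr => p _.
rewrite big_distrr; apply: eq_bigr => q _; rewrite coord2_count_setT.
by rewrite -(coord2_count_relabel relabel_closed i j p0 p0 (tperm p0 p)) tpermL.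
Qed.

End AllFunctions.

Local Open Scope ring_scope.

Section UniformMoments.
Variables (R : realFieldType) (T : finType) (A : {set T}).

Lemma eq_unifE (X Y : T -> R) : X =1 Y -> unifE A X = unifE A Y.
Proof. by move=> eXY; rewrite /unifE; under eq_bigr do rewrite eXY. Qed.

Lemma unifE_sum (I : finType) (X : I -> T -> R) :
  unifE A (fun w => \sum_i X i w) = \sum_i unifE A (X i).
Proof. by rewrite /unifE exchange_big /= mulr_suml. Qed.

Lemma unifVarE (X : T -> R) :
  #|A| != 0%N -> unifVar A X = unifE A (fun w => X w ^+ 2) - unifE A X ^+ 2.
Proof.
move=> A_neq0; have N_neq0 : (#|A|%:R : R) != 0 by rewrite pnatr_eq0.
rewrite /unifVar /unifE; under eq_bigr do rewrite sqrrB.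
rewrite big_split sumrB /= sumr_const sumrMnl -mulr_suml.
rewrite -[_ *+ 2]mulr_natr -[_ *+ #|A|]mulr_natr.
move: (\sum_(w in A) X w ^+ 2) (\sum_(w in A) X w) => S2 S1.
by field.
Qed.

Lemma unifE_nat_ratio (G : T -> nat) (c N M : nat) :
  #|A| != 0%N -> #|A| = (c * N)%N -> (\sum_(w in A) G w = c * M)%N ->
  unifE A (fun w => (G w)%:R : R) = M%:R / N%:R.
Proof.
move=> + cardA sumG; rewrite /unifE -natr_sum sumG cardA muln_eq0 negb_or.
case/andP; rewrite -(pnatr_eq0 R) => c_neq0 _.
by rewrite !natrM -mulf_div divff // mul1r.
Qed.

End UniformMoments.

Lemma natr_card_set (R : pzSemiRingType) (I : finType) (P : pred I) :
  #|[set i | P i]|%:R = \sum_i (P i)%:R :> R.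
Proof.
by rewrite -sum1dep_card natr_sum big_mkcond; apply: eq_bigr => i _; case: (P i).
Qed.

Section IndicatorSum.
Variables (R : realFieldType) (W : finType) (A : {set W}) (n : nat).
Variables (b : 'I_n -> W -> bool) (k r : R).
Hypothesis A_neq0 : #|A| != 0%N.
Hypothesis unifE_b : forall i, unifE A (fun w => (b i w)%:R) = k.
Hypothesis unifE_bb : forall i j, i != j -> unifE A (fun w => (b i w && b j w)%:R) = r.

Lemma unifE_card_indicators : unifE A (fun w => #|[set i | b i w]|%:R) = n%:R * k.
Proof.
rewrite (eq_unifE _ (fun w => natr_card_set R (b^~ w))) unifE_sum.
by under eq_bigr do rewrite unifE_b; rewrite sumr_const card_ord mulr_natl.
Qed.

Lemma unifVar_card_indicators :
  unifVar A (fun w => #|[set i | b i w]|%:R) =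
  n%:R * k + n%:R * n.-1%:R * r - (n%:R * k) ^+ 2.
Proof.
rewrite unifVarE // unifE_card_indicators; congr (_ - _).
have sqr_count w :
    #|[set i | b i w]|%:R ^+ 2 = \sum_i \sum_j (b i w && b j w)%:R :> R.
  rewrite natr_card_set expr2 big_distrlr /=.
  by apply: eq_bigr => i _; apply: eq_bigr => j _; rewrite -natrM mulnb.
have row_sum i : unifE A (fun w => \sum_j (b i w && b j w)%:R) = k + r *+ n.-1.
  rewrite unifE_sum (bigD1 i) //=.
  have -> : unifE A (fun w => (b i w && b i w)%:R) = k.
    by rewrite -(unifE_b i); apply: eq_unifE => w; rewrite andbb.
  rewrite (eq_bigr (fun _ => r)) => [|j neq_ji]; last by rewrite unifE_bb // eq_sym.
  by rewrite sumr_const cardC1 card_ord.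
rewrite (eq_unifE _ sqr_count) unifE_sum.
under eq_bigr do rewrite row_sum.
rewrite sumr_const card_ord mulrnDl -[k *+ n]mulr_natl -[r *+ n.-1]mulr_natl.
by rewrite -[(_ * r) *+ n]mulr_natl mulrA.
Qed.

End IndicatorSum.

Lemma sum_nat_offdiag_in (T : finType) (L : {pred T}) :
  (\sum_p \sum_(q | q != p) ((p \in L) && (q \in L)) = #|L| * #|L|.-1)%N.
Proof.
rewrite (bigID (mem L)) /= [X in (_ + X)%N]big1 ?addn0 => [|p /negbTE pNL]; last first.
  by apply: big1 => q _; rewrite pNL.
rewrite (eq_bigr (fun=> #|L|.-1)) ?sum_nat_const // => p pL.
rewrite (cardD1 p) pL add1n /= -sum1_card big_mkcond [RHS]big_mkcond /=.
by apply: eq_bigr => q _; rewrite !inE; case: (q != p); case: (q \in L).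
Qed.

Section CoordinateProbabilities.
Variables (R : realFieldType) (T : finType) (n : nat) (L : {pred T}).

Section RelabelClosed.
Variable A : {set {ffun 'I_n -> T}}.
Hypothesis A_neq0 : #|A| != 0%N.
Hypothesis relabel_closed : forall s f, (relabel s f \in A) = (f \in A).

Lemma unifE_coord_in i : unifE A (fun f => (f i \in L)%:R : R) = #|L|%:R / #|T|%:R.
Proof.
have [c sum_c] := sum_coord_uniform relabel_closed i.
apply: (@unifE_nat_ratio R _ A (fun f => f i \in L : nat) c #|T| #|L|) => //.
  by rewrite -sum1_card (sum_c (fun=> 1%N)) sum1_card.
by rewrite (sum_c (fun p => p \in L : nat)) sum_nat_in.
Qed.

Lemma unifE_coord2_in_injective i j :
  (forall f, f \in A -> injective f) -> i != j ->
  unifE A (fun f => ((f i \in L) && (f j \in L))%:R : R) =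
  (#|L| * #|L|.-1)%:R / (#|T| * #|T|.-1)%:R.
Proof.
move=> injA neq_ij; have [c sum_c] := sum_coord2_injective relabel_closed injA neq_ij.
apply: (@unifE_nat_ratio R _ A (fun f => (f i \in L) && (f j \in L) : nat) c
  (#|T| * #|T|.-1) (#|L| * #|L|.-1)) => //.
  rewrite -sum1_card (sum_c (fun _ _ => 1%N)); congr (c * _)%N.
  by rewrite -sum_nat_offdiag_in; apply: eq_bigr => p _; apply: eq_bigr.
by rewrite (sum_c (fun p q => (p \in L) && (q \in L) : nat)) sum_nat_offdiag_in.
Qed.

End RelabelClosed.

Lemma unifE_coord2_in_setT i j : (0 < #|T|)%N -> i != j ->
  unifE [set: {ffun 'I_n -> T}] (fun f => ((f i \in L) && (f j \in L))%:R : R) =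
  (#|L|%:R / #|T|%:R) ^+ 2.
Proof.
case/card_gt0P => p0 _ neq_ij; have [c sum_c] := sum_coord2_setT T neq_ij.
rewrite expr_div_n -!natrX.
apply: (@unifE_nat_ratio R _ [set: {ffun 'I_n -> T}]
  (fun f => (f i \in L) && (f j \in L) : nat) c (#|T| ^ 2) (#|L| ^ 2)).
- by apply/eqP => /card0_eq/(_ [ffun=> p0]); rewrite inE.
- rewrite -sum1_card (sum_c (fun _ _ => 1%N)).
  by under eq_bigr do rewrite sum1_card; rewrite sum_nat_const.
- rewrite (sum_c (fun p q => (p \in L) && (q \in L) : nat)); congr (c * _)%N.
  under eq_bigr do under eq_bigr do rewrite -mulnb.
  by rewrite -big_distrlr /= sum_nat_in.
Qed.

End CoordinateProbabilities.

Section ProductMarginal.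
Variables (R : realFieldType) (T1 T2 : finType) (A : {set T1}).
Hypothesis T2_gt0 : (0 < #|T2|)%N.

Lemma unifE_setXT (X : T1 -> R) (Y : T1 * T2 -> R) :
  Y =1 X \o fst -> unifE (setX A [set: T2]) Y = unifE A X.
Proof.
move=> Y_fst.
have sumY : \sum_(w in setX A [set: T2]) Y w = (\sum_(a in A) X a) * #|T2|%:R.
  rewrite (eq_bigr _ (fun w _ => Y_fst w)) /=.
  rewrite (eq_bigl (fun w => (w.1 \in A) && predT w.2)) => [|[a b]]; last first.
    by rewrite in_setX in_setT andbT.
  rewrite -(pair_big_dep (mem A) (fun _ => predT) (fun a _ => X a)) /= mulr_suml.
  by apply: eq_bigr => a _; rewrite sumr_const cardT -cardE mulr_natr.
rewrite /unifE sumY cardsX cardsT natrM -mulf_div divff ?mulr1 //.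
by rewrite pnatr_eq0 -lt0n.
Qed.

Lemma unifVar_setXT (X : T1 -> R) (Y : T1 * T2 -> R) :
  Y =1 X \o fst -> unifVar (setX A [set: T2]) Y = unifVar A X.
Proof.
move=> Y_fst; rewrite /unifVar (unifE_setXT Y_fst).
by apply: unifE_setXT => w; rewrite /= Y_fst.
Qed.

End ProductMarginal.

Lemma nnz_row_labels (d n : nat) (lab : 'I_n -> 'I_d) (s : 'I_n -> bool) (t : 'I_d) :
  nnz_row (\matrix_(j, i) (if lab i == j then sgn (s i) else 0)) t =
  #|[set i | lab i == t]|.
Proof.
by apply: eq_card => i; rewrite !inE mxE; case: (lab i == t); case: (s i).
Qed.

Lemma pair_prob_without_replacement_le (R : realFieldType) (l N : nat) : (l <= N)%N ->
  (l * l.-1)%:R / (N * N.-1)%:R <= (l%:R / N%:R) ^+ 2 :> R.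
Proof.
move=> le_lN; have [N_le1 | N_gt1] := leqP N 1.
  suff -> : (N * N.-1)%N = 0%N by rewrite invr0 mulr0 sqr_ge0.
  by case: N N_le1 {le_lN} => [|[]].
have N_gt0 : (0 < N)%N by apply: ltnW.
rewrite -!subn1 expr_div_n ler_pdivrMr ?ltr0n ?muln_gt0 ?N_gt0 ?subn_gt0 //.
rewrite mulrAC ler_pdivlMr ?exprn_gt0 ?ltr0n // -!natrX -!natrM ler_nat.
have -> : (l * (l - 1) * N ^ 2 = l * N * ((l - 1) * N))%N by ring.
have -> : (l ^ 2 * (N * (N - 1)) = l * N * (l * (N - 1)))%N by ring.
rewrite leq_mul2l; apply/orP; right; nia.
Qed.

Lemma injective_ffun_exists (T : finType) (n : nat) :
  (n <= #|T|)%N -> exists f : {ffun 'I_n -> T}, injective f.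
Proof.
move=> le_nT; exists [ffun i => enum_val (widen_ord le_nT i)] => i j.
by rewrite !ffunE => /enum_val_inj/(congr1 val) /= /val_inj.
Qed.

Lemma ceil_div_spec (n d : nat) : (0 < d)%N -> (n <= ceil_div n d * d)%N.
Proof.
move=> d_gt0; rewrite /ceil_div.
have := divn_eq (n + d.-1) d; have := ltn_pmod (n + d.-1) d_gt0.
nia.
Qed.

Lemma unifE_unifVar_SSSE_row (R : realFieldType) (n d : nat) (t : 'I_d) :
  (0 < d)%N ->
  let m := ceil_div n d in
  let Y := fun w : SSSE_space n d => (nnz_row (R_S w) t)%:R : R in
  unifE (SSSE_outcomes n d) Y = n%:R * (m%:R / (m * d)%:R) /\
  unifVar (SSSE_outcomes n d) Y =
    n%:R * (m%:R / (m * d)%:R)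
    + n%:R * n.-1%:R * ((m * m.-1)%:R / (m * d * (m * d).-1)%:R)
    - (n%:R * (m%:R / (m * d)%:R)) ^+ 2.
Proof.
move=> d_gt0 m Y.
pose A := [set f : {ffun 'I_n -> 'I_m * 'I_d} | injectiveb f].
pose L := [pred x : 'I_m * 'I_d | x.2 == t].
have cardT : #|{: 'I_m * 'I_d}| = (m * d)%N by rewrite card_prod !card_ord.
have cardL : #|L| = m.
  have eqL : L =i setX [set: 'I_m] [set t] by move=> x; rewrite !inE.
  by rewrite (eq_card eqL) cardsX cardsT card_ord cards1 muln1.
have A_neq0 : #|A| != 0%N.
  have [f0 inj_f0] : exists f : {ffun 'I_n -> 'I_m * 'I_d}, injective f.
    by apply: injective_ffun_exists; rewrite cardT ceil_div_spec.
  by apply/eqP => /card0_eq/(_ f0); rewrite inE => /injectiveP.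
have injA f : f \in A -> injective f by rewrite inE => /injectiveP.
have relabelA s f : (relabel s f \in A) = (f \in A) by rewrite !inE injectiveb_relabel.
have outcomes : SSSE_outcomes n d = setX A [set: {ffun 'I_n -> bool}].
  by apply/setP => -[f s]; rewrite !inE andbT.
have signs_gt0 : (0 < #|{ffun 'I_n -> bool}|)%N by apply/card_gt0P; exists [ffun=> true].
have Y_fst :
    Y =1 (fun f : {ffun 'I_n -> 'I_m * 'I_d} => #|[set i | f i \in L]|%:R : R) \o fst.
  by move=> w; rewrite /Y (nnz_row_labels (fun i => (w.1 i).2) w.2).
rewrite outcomes (unifE_setXT A signs_gt0 Y_fst) (unifVar_setXT A signs_gt0 Y_fst).
have k i : unifE A (fun f => (f i \in L)%:R : R) = m%:R / (m * d)%:R.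
  by rewrite unifE_coord_in // cardL cardT.
have r i j : i != j -> unifE A (fun f => ((f i \in L) && (f j \in L))%:R : R) =
    (m * m.-1)%:R / (m * d * (m * d).-1)%:R.
  by move=> neq_ij; rewrite unifE_coord2_in_injective // cardL cardT.
by split; [exact: unifE_card_indicators | exact: unifVar_card_indicators].
Qed.

Lemma unifE_unifVar_SE_row (R : realFieldType) (n d : nat) (t : 'I_d) :
  let Z := fun w : SE_space n d => (nnz_row (R_SE w) t)%:R : R in
  unifE (SE_outcomes n d) Z = n%:R * d%:R^-1 /\
  unifVar (SE_outcomes n d) Z =
    n%:R * d%:R^-1 + n%:R * n.-1%:R * d%:R^-1 ^+ 2 - (n%:R * d%:R^-1) ^+ 2.
Proof.
move=> Z.
pose A := [set: {ffun 'I_n -> 'I_d}].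
have d_gt0 : (0 < #|'I_d|)%N by apply/card_gt0P; exists t.
have A_neq0 : #|A| != 0%N by apply/eqP => /card0_eq/(_ [ffun=> t]); rewrite inE.
have outcomes : SE_outcomes n d = setX A [set: {ffun 'I_n -> bool}].
  by apply/setP => -[f s]; rewrite !inE.
have signs_gt0 : (0 < #|{ffun 'I_n -> bool}|)%N by apply/card_gt0P; exists [ffun=> true].
have Z_fst :
    Z =1 (fun f : {ffun 'I_n -> 'I_d} => #|[set i | f i \in pred1 t]|%:R : R) \o fst.
  by move=> w; rewrite /Z (nnz_row_labels w.1 w.2).
rewrite outcomes (unifE_setXT A signs_gt0 Z_fst) (unifVar_setXT A signs_gt0 Z_fst).
have k i : unifE A (fun f => (f i \in pred1 t)%:R : R) = d%:R^-1.
  by rewrite unifE_coord_in // => [|s f]; rewrite ?card1 ?card_ord ?div1r // !inE.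
have r i j : i != j ->
    unifE A (fun f => ((f i \in pred1 t) && (f j \in pred1 t))%:R : R) = d%:R^-1 ^+ 2.
  by move=> neq_ij; rewrite unifE_coord2_in_setT // card1 card_ord div1r.
by split; [exact: unifE_card_indicators | exact: unifVar_card_indicators].
Qed.

Theorem theorem1 (R : realFieldType) (n d : nat) (hd : (1 <= d)%N) (hdn : (d <= n)%N)
    (t : 'I_d) :
  let Y := fun w : SSSE_space n d => (nnz_row (R_S w) t)%:R : R in
  let Z := fun w : SE_space n d => (nnz_row (R_SE w) t)%:R : R in
  unifE (SSSE_outcomes n d) Y = unifE (SE_outcomes n d) Z /\
  unifVar (SSSE_outcomes n d) Y <= unifVar (SE_outcomes n d) Z.
Proof.
move=> Y Z.
have [EY VY] := unifE_unifVar_SSSE_row R n t hd.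
have [EZ VZ] := unifE_unifVar_SE_row R n t.
set m := ceil_div n d in EY VY.
have m_gt0 : (0 < m)%N by rewrite divn_gt0 // (leq_trans hdn) // leq_addr.
have coord_prob : m%:R / (m * d)%:R = d%:R^-1 :> R.
  by rewrite natrM invfM mulrA divff ?mul1r // pnatr_eq0 -lt0n.
rewrite -/Y -/Z in EY VY EZ VZ.
rewrite EY VY EZ VZ coord_prob; split=> //.
rewrite lerD2r lerD2l ler_wpM2l ?mulr_ge0 //.
by rewrite -coord_prob pair_prob_without_replacement_le // leq_pmulr.
Qed.
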